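(* Let $M$ be a finite-dimensional left $\mathsf{VBr}_{r,t}(\omega)$-module with decomposition $M=\bigoplus_{\mathbf a,\mathbf i}1_{\mathbf a}M_{\mathbf i}$. Let $\mathbf a\in\mathrm{Seq}_{r,t}$, $k\in\{1,\dots,r+t-1\}$ with $\mathsf s_k\mathbf a\neq\mathbf a$, and $\mathbf i\in\mathbb C^{r+t}$. Let $I=\{\mathbf i'\in\mathbb C^{r+t}:\mathrm i'_j=\mathrm i_j\text{ for }j\ne k,k+1,\ \mathrm i'_k+\mathrm i'_{k+1}=0\}$. Then $e_k1_{\mathbf a}M_{\mathbf i}=\{0\}$ if $\mathrm i_k+\mathrm i_{k+1}\neq0$, and $e_k1_{\mathbf a}M_{\mathbf i}\subseteq\bigoplus_{\mathbf i'\in I}1_{\mathbf a}M_{\mathbf i'}$ if $\mathrm i_k+\mathrm i_{k+1}=0$; analogously $\hat e_k1_{\mathbf a}M_{\mathbf i}=\{0\}$ if $\mathrm i_k+\mathrm i_{k+1}\ne0$ and $\hat e_k1_{\mathbf a}M_{\mathbf i}\subseteq\bigoplus_{\mathbf i'\in I}1_{\mathsf s_k\mathbf a}M_{\mathbf i'}$ if $\mathrm i_k+\mathrm i_{k+1}=0$.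
   Context: $\mathrm{Seq}_{r,t}$: sequences $\mathbf a\in\{\wedge,\vee\}^{r+t}$ with exactly $r$ entries $\wedge$; $J=\{1,\dots,r+t-1\}$; $\mathsf s_k$ swaps entries $k,k+1$. $\mathrm{Br}_{r,t}(\gamma)$: basis oriented Brauer diagrams $\mathbf a\to\mathbf b$ (perfect matchings between bottom row labelled $\mathbf a$ and top row labelled $\mathbf b$; bottom-to-top strands join equal labels, strands within a row join different labels), product by stacking (second factor below), $0$ if labels mismatch, loops replaced by $\gamma$. $1_{\mathbf a}$ identity; for $k\in J$: if $a_k=a_{k+1}$, $s_k1_{\mathbf a}$ crosses strands $k,k+1$ ($\mathbf a\to\mathbf a$); if $a_k\neq a_{k+1}$, $\hat s_k1_{\mathbf a}$ crossing $\mathbf a\to\mathsf s_k\mathbf a$, $e_k1_{\mathbf a}$ cap at bottom $k,k+1$ and cup at top $k,k+1$ ($\mathbf a\to\mathbf a$), $\hat e_k1_{\mathbf a}$ same shape $\mathbf a\to\mathsf s_k\mathbf a$; these are $0$ when the condition fails; $s_k=\sum_{\mathbf a}s_k1_{\mathbf a}$ etc. For $\omega=(\omega_j)_{j\ge0}\subset\mathbb C$, $\mathsf{VBr}_{r,t}(\omega)$ is the quotient of the free product $\mathrm{Br}_{r,t}(\omega_0)*\mathbb C[y_1,\dots,y_{r+t}]$ by: $y_i$ commutes with all $1_{\mathbf a}$, and with $s_k,\hat s_k,e_k,\hat e_k$ when $i\notin\{k,k+1\}$; $e_1y_1^je_11_{\mathbf a}=\omega_je_11_{\mathbf a}$ for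 $j\ge0$ and $(a_1,a_2)=(\wedge,\vee)$; for $a_k=a_{k+1}$: $s_ky_k1_{\mathbf a}-y_{k+1}s_k1_{\mathbf a}=-1_{\mathbf a}$, $s_ky_{k+1}1_{\mathbf a}-y_ks_k1_{\mathbf a}=1_{\mathbf a}$; $\hat s_ky_k-y_{k+1}\hat s_k=\hat e_k$, $\hat s_ky_{k+1}-y_k\hat s_k=-\hat e_k$; $e_k,\hat e_k$ are annihilated on both sides by $y_k+y_{k+1}$. $1_{\mathbf a}M_{\mathbf i}=\{v\in1_{\mathbf a}M:(y_k-\mathrm i_k)^Nv=0\ \forall k,\ N\gg0\}$. *)

From HB Require Import structures.
From mathcomp Require Import all_boot all_order all_algebra all_fingroup.
From mathcomp Require Import complex.
From mathcomp Require Import reals Rstruct.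
Set Implicit Arguments. Unset Strict Implicit. Unset Printing Implicit Defensive.
Import GRing.Theory.
Local Open Scope ring_scope.

Definition C : closedFieldType := (Rdefinitions.R)[i].

(* Oriented Brauer diagrams on n = r + t points per row.               *)
(* Positions are 0-based: paper position j  <->  ordinal j-1.          *)
(* Labels: true = wedge (^), false = vee (v).                          *)
Section Brauer.
Variable n : nat.

Definition lab := {ffun 'I_n -> bool}.
(* points of a diagram: inl i = bottom row position i, inr i = top row *)
Definition pt := ('I_n + 'I_n)%type.

Record bdiag := BDiag { bbot : lab; btop : lab; bmat : {ffun pt -> pt} }.

Definition ptlab (d : bdiag) (p : pt) : bool :=
  match p with inl i => bbot d i | inr i => btop d i end.

Definition same_row (p q : pt) : bool :=
  match p, q with inl _, inl _ => true | inr _, inr _ => true | _, _ => false end.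

Definition inSeq (r : nat) (a : lab) : bool := #|[pred i | a i]| == r.

(* d is a basis oriented Brauer diagram  bbot d -> btop d *)
Definition bdiag_ok (r : nat) (d : bdiag) : bool :=
  [&& inSeq r (bbot d), inSeq r (btop d) &
   [forall p : pt, [&& bmat d p != p, bmat d (bmat d p) == p &
      if same_row p (bmat d p) then ptlab d p != ptlab d (bmat d p)
      else ptlab d p == ptlab d (bmat d p)]]].

(* Stacking d1 on top of d2 (d2 below).  Vertices: outer points
   (inl (inl i) = bottom of d2, inl (inr i) = top of d1) and the
   middle row (inr i = top of d2 = bottom of d1). *)
Definition vtx := (pt + 'I_n)%type.
Definition emb_lo (p : pt) : vtx :=
  match p with inl i => inl (inl i) | inr i => inr i end.
Definition emb_hi (p : pt) : vtx :=
  match p with inl i => inr i | inr i => inl (inr i) end.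

Definition cedge (d1 d2 : bdiag) : rel vtx := fun x y =>
  [exists p, (emb_lo p == x) && (emb_lo (bmat d2 p) == y)] ||
  [exists p, (emb_hi p == x) && (emb_hi (bmat d1 p) == y)].

Definition bcomp_mat (d1 d2 : bdiag) : {ffun pt -> pt} :=
  [ffun p => odflt p [pick q | (q != p) && connect (cedge d1 d2) (inl p) (inl q)]].

Definition bcomp (d1 d2 : bdiag) : bdiag := BDiag (bbot d2) (btop d1) (bcomp_mat d1 d2).

(* number of closed loops created by stacking *)
Definition bloops (d1 d2 : bdiag) : nat :=
  n_comp (cedge d1 d2)
    [pred v : vtx | if v is inr _ then
        [forall p : pt, ~~ connect (cedge d1 d2) v (inl p)] else false].

Definition idmat : {ffun pt -> pt} :=
  [ffun p => match p with inl i => inr i | inr i => inl i end].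
Definition bid (a : lab) : bdiag := BDiag a a idmat.

(* neighbour k+1 of position k (meaningful when (k.+1 < n)%N) *)
Definition nxt (k : 'I_n) : 'I_n := insubd k k.+1.
Definition sw (k : 'I_n) : 'I_n -> 'I_n := fun i => tperm k (nxt k) i.
Definition swlab (k : 'I_n) (a : lab) : lab := [ffun i => a (sw k i)].

Definition crmat (k : 'I_n) : {ffun pt -> pt} :=
  [ffun p => match p with inl i => inr (sw k i) | inr i => inl (sw k i) end].
(* cap at bottom k,k+1 and cup at top k,k+1 *)
Definition cupmat (k : 'I_n) : {ffun pt -> pt} :=
  [ffun p => match p with
    | inl i => if (i == k) || (i == nxt k) then inl (sw k i) else inr i
    | inr i => if (i == k) || (i == nxt k) then inr (sw k i) else inl i end].

Definition s_diag k a := BDiag a a (crmat k).              (* s_k 1_a, a_k = a_{k+1} *)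
Definition shat_diag k a := BDiag a (swlab k a) (crmat k).
Definition e_diag k a := BDiag a a (cupmat k).
Definition ehat_diag k a := BDiag a (swlab k a) (cupmat k).

End Brauer.

(* Finite-dimensional left VBr_{r,t}(om)-modules: M = F^dim (column   *)
(* vectors), rho = action of the basis diagrams of Br_{r,t}(om 0),    *)
(* Y i = action of y_{i+1}.                                            *)
Section VBr.
Variables (F : fieldType) (r t : nat) (om : nat -> F) (dim : nat).
Local Notation n := (r + t).
Variables (rho : bdiag n -> 'M[F]_dim) (Y : 'I_n -> 'M[F]_dim).

Definition One (a : lab n) := rho (bid a).
Definition Sop (k : 'I_n) : 'M[F]_dim :=
  \sum_(a : lab n | inSeq r a && (a k == a (nxt k))) rho (s_diag k a).
Definition Shat (k : 'I_n) : 'M[F]_dim :=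
  \sum_(a : lab n | inSeq r a && (a k != a (nxt k))) rho (shat_diag k a).
Definition Eop (k : 'I_n) : 'M[F]_dim :=
  \sum_(a : lab n | inSeq r a && (a k != a (nxt k))) rho (e_diag k a).
Definition Ehat (k : 'I_n) : 'M[F]_dim :=
  \sum_(a : lab n | inSeq r a && (a k != a (nxt k))) rho (ehat_diag k a).

Definition commutes (A B : 'M[F]_dim) := A *m B = B *m A.

Definition is_VBr_module : Prop :=
  (* rho is a unital algebra map from Br_{r,t}(om 0) *)
  [/\ (forall d1 d2 : bdiag n, bdiag_ok r d1 -> bdiag_ok r d2 ->
        rho d1 *m rho d2 =
        if btop d2 == bbot d1 then (om 0 ^+ bloops d1 d2) *: rho (bcomp d1 d2)
        else 0),
      \sum_(a : lab n | inSeq r a) One a = 1%:M,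
      (forall i j, commutes (Y i) (Y j)),
      (forall i (a : lab n), inSeq r a -> commutes (Y i) (One a)) &
  [/\
      (forall (k i : 'I_n), (k.+1 < n)%N -> i != k -> i != nxt k ->
        [/\ commutes (Y i) (Sop k), commutes (Y i) (Shat k),
            commutes (Y i) (Eop k) & commutes (Y i) (Ehat k)]),
      (forall (k : 'I_n) (a : lab n) (j : nat), val k = 0%N -> (k.+1 < n)%N ->
        inSeq r a -> a k = true -> a (nxt k) = false ->
        Eop k *m Y k ^+ j *m Eop k *m One a = om j *: rho (e_diag k a)),
      (forall (k : 'I_n) (a : lab n), (k.+1 < n)%N -> inSeq r a -> a k = a (nxt k) ->
        Sop k *m Y k *m One a - Y (nxt k) *m Sop k *m One a = - One a /\
        Sop k *m Y (nxt k) *m One a - Y k *m Sop k *m One a = One a),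
      (forall (k : 'I_n), (k.+1 < n)%N ->
        Shat k *m Y k - Y (nxt k) *m Shat k = Ehat k /\
        Shat k *m Y (nxt k) - Y k *m Shat k = - Ehat k) &
      (forall (k : 'I_n), (k.+1 < n)%N ->
        [/\ Eop k *m (Y k + Y (nxt k)) = 0, (Y k + Y (nxt k)) *m Eop k = 0,
            Ehat k *m (Y k + Y (nxt k)) = 0 & (Y k + Y (nxt k)) *m Ehat k = 0])]].

Definition in_wsp (a : lab n) (w : 'I_n -> F) (v : 'cV[F]_dim) : Prop :=
  (exists u, v = One a *m u) /\
  exists N : nat, forall j : 'I_n, (Y j - (w j)%:M) ^+ N *m v = 0.

(* v \in sum_{w in P} 1_a M_w  (finite sums of elements of the summands) *)
Definition in_wsp_sum (P : ('I_n -> F) -> Prop) (a : lab n) (v : 'cV[F]_dim) : Prop :=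
  exists (m : nat) (ws : 'I_m -> ('I_n -> F)) (vs : 'I_m -> 'cV[F]_dim),
    (forall l, P (ws l) /\ in_wsp a (ws l) (vs l)) /\ v = \sum_(l < m) vs l.

Definition Iset (k : 'I_n) (w : 'I_n -> F) (w' : 'I_n -> F) : Prop :=
  (forall j, j != k -> j != nxt k -> w' j = w j) /\ w' k + w' (nxt k) = 0.

End VBr.

From HB Require Import structures.
From mathcomp Require Import all_boot all_order all_algebra all_fingroup.
From mathcomp Require Import complex.
From mathcomp Require Import reals Rstruct.
From mathcomp Require Import ring zify.
Set Implicit Arguments. Unset Strict Implicit. Unset Printing Implicit Defensive.
Import GRing.Theory.
Local Open Scope ring_scope.

(* Since y_k + y_{k+1} annihilates e_k and \hat e_k from the right, these kill
   every generalized eigenvector on which y_k + y_{k+1} acts invertibly, i.e.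
   when i_k + i_{k+1} <> 0.  In general e_k v still lies in 1_a M (resp.
   1_{s_k a} M), is killed by y_k + y_{k+1}, and keeps the generalized
   eigenvalues i_j, j <> k, k+1, because y_j commutes with e_k.  Splitting it by
   the spectral projectors of y_k (polynomials in y_k obtained from a Bezout
   partition of unity for its characteristic polynomial) gives pieces on which
   y_k has a single eigenvalue c; there y_{k+1} = (y_k + y_{k+1}) - y_k has the
   single eigenvalue -c. *)

Section PartitionOfUnity.
Variable F : fieldType.

Lemma coprimep_XsubC_prod (z : F) (u : seq F) (e : F -> nat) : z \notin u ->
  coprimep (('X - z%:P) ^+ e z) (\prod_(x <- u) ('X - x%:P) ^+ e x).
Proof.
move=> zNu; rewrite big_seq; apply: (big_ind (coprimep _)) => [|p q|x xu].
- exact: coprimep1.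
- by rewrite coprimepMr => -> ->.
rewrite coprimep_expl // coprimep_expr // coprimep_sym coprimep_XsubC root_XsubC.
by apply: contraNneq zNu => ->.
Qed.

Lemma prod_XsubC_partition_of_unity (u : seq F) (e : F -> nat) : uniq u ->
  exists L : seq (F * {poly F}),
    \prod_(x <- u) ('X - x%:P) ^+ e x %| 1 - \sum_(pr <- L) pr.2 /\
    forall pr, pr \in L ->
      \prod_(x <- u) ('X - x%:P) ^+ e x %| ('X - pr.1%:P) ^+ e pr.1 * pr.2.
Proof.
elim: u => [_|z u IHu /= /andP [zNu /IHu [L [dvd_sum dvd_L]]]].
  by exists [::]; rewrite big_nil dvd1p.
rewrite big_cons; set Q := ('X - z%:P) ^+ e z; set R := \prod_(x <- u) _.
have /Bezout_eq1_coprimepP [[al be] /= bezout] := coprimep_XsubC_prod e zNu.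
rewrite -/Q -/R in bezout.
exists ((z, be * R) :: [seq (pr.1, pr.2 * (al * Q)) | pr <- L]).
split.
  rewrite big_cons big_map -mulr_suml /=.
  have -> : 1 - (be * R + (\sum_(pr <- L) pr.2) * (al * Q)) =
            (1 - \sum_(pr <- L) pr.2) * al * Q.
    by rewrite -{1}bezout; ring.
  by rewrite mulrC dvdp_mul ?dvdp_mulr.
move=> pr; rewrite inE => /predU1P [-> | /mapP [pr' pr'L ->]] /=.
  by rewrite -/Q mulrCA dvdp_mulIr.
by rewrite !mulrA [Q * R]mulrC dvdp_mul ?dvdpp // dvdp_mulr ?dvd_L.
Qed.
End PartitionOfUnity.

Lemma horner_mx_char_poly_dvdp (F : fieldType) n (A : 'M[F]_n.+1) p :
  char_poly A %| p -> horner_mx A p = 0.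
Proof. by case/dvdpP => q ->; rewrite rmorphM /= Cayley_Hamilton mulr0. Qed.

Lemma gen_eigen_projectors (F : closedFieldType) n (A : 'M[F]_n) :
  exists L : seq (F * 'M[F]_n),
    \sum_(pr <- L) pr.2 = 1%:M /\
    forall pr, pr \in L ->
      (exists m, (A - pr.1%:M) ^+ m *m pr.2 = 0) /\
      forall B, A *m B = B *m A -> pr.2 *m B = B *m pr.2.
Proof.
case: n => [|n] in A *; first by exists [::]; rewrite big_nil thinmx0.
have [s char_s] := closed_field_poly_normal (char_poly A).
rewrite (monicP (char_poly_monic A)) scale1r in char_s.
pose e z := count_mem z s.
have [L [dvd_sum dvd_L]] := prod_XsubC_partition_of_unity e (undup_uniq s).
rewrite big_undup_iterop_count -char_s in dvd_sum dvd_L.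
exists [seq (pr.1, horner_mx A pr.2) | pr <- L]; split.
  apply/eqP; rewrite idmxE big_map /= -(rmorph_sum (horner_mx A)) eq_sym -subr_eq0.
  by rewrite -(rmorph1 (horner_mx A)) -rmorphB; apply/eqP/horner_mx_char_poly_dvdp.
move=> _ /mapP [pr prL ->] /=; split; last first.
  by move=> B AB; apply: comm_horner_mx.
exists (e pr.1); rewrite mulmxE.
have := horner_mx_char_poly_dvdp (dvd_L pr prL).
by rewrite rmorphM rmorphXn rmorphB /= horner_mx_X horner_mx_C.
Qed.

Section NilpotentActions.
Variables (F : fieldType) (d : nat).
Implicit Types (A B E : 'M[F]_d) (v y : 'cV[F]_d).

Lemma mulmx_expr_eq0_leq A v m N : (m <= N)%N -> A ^+ m *m v = 0 -> A ^+ N *m v = 0.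
Proof. by move=> /subnK <- Av; rewrite exprD -mulmxE -mulmxA Av mulmx0. Qed.

Lemma subr_scalar_mx_comm A B (a b : F) : A *m B = B *m A ->
  GRing.comm (A - a%:M) (B - b%:M).
Proof.
move=> AB; rewrite /GRing.comm -!mulmxE !mulmxBl !mulmxBr AB.
rewrite !mul_mx_scalar !mul_scalar_mx !scale_scalar_mx mulrC !opprB !addrA.
by rewrite [LHS]addrAC [RHS]addrAC [X in X + _ = _]addrAC.
Qed.

Lemma subr_scalar_mx_expr_comm A B (c : F) N : A *m B = B *m A ->
  (A - c%:M) ^+ N *m B = B *m (A - c%:M) ^+ N.
Proof.
move=> AB; rewrite mulmxE; apply/commr_sym/commrX.
by rewrite /GRing.comm -!mulmxE mulmxBl mulmxBr AB scalar_mxC.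
Qed.

Lemma addr_expr_mulmx_eq0 A B v N : GRing.comm A B ->
  A ^+ N *m v = 0 -> B ^+ N *m v = 0 -> (A + B) ^+ (N + N) *m v = 0.
Proof.
move=> AB Av Bv; rewrite exprDn_comm // mulmx_suml big1 // => i _.
rewrite -mulr_natl -!mulmxE -!mulmxA.
have [leNi | ltiN] := leqP N i; first by rewrite (mulmx_expr_eq0_leq leNi Bv) !mulmx0.
have BA : GRing.comm (B ^+ i) (A ^+ (N + N - i)) by apply/commrX/commr_sym/commrX.
rewrite (mulmxA (A ^+ _)) mulmxE -BA -mulmxE -mulmxA.
have leN : (N <= N + N - i)%N by lia.
by rewrite (mulmx_expr_eq0_leq leN Av) !mulmx0.
Qed.

Lemma gen_eigen_annihilated_eq0 E A B v (a b : F) N :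
  E *m (A + B) = 0 -> A *m B = B *m A ->
  (A - a%:M) ^+ N *m v = 0 -> (B - b%:M) ^+ N *m v = 0 -> a + b != 0 ->
  E *m v = 0.
Proof.
move=> EAB AB Av Bv abN0.
have := addr_expr_mulmx_eq0 (subr_scalar_mx_comm a b AB) Av Bv.
have -> : A - a%:M + (B - b%:M) = A + B - (a + b)%:M.
  by rewrite raddfD /= opprD !addrA (addrAC A).
have E_expr m : E *m (A + B - (a + b)%:M) ^+ m = (- (a + b)) ^+ m *: E.
  elim: m => [|m IHm]; first by rewrite !expr0 mulmx1 scale1r.
  rewrite exprSr -mulmxE mulmxA IHm -scalemxAl mulmxBr EAB mul_mx_scalar sub0r.
  by rewrite -scaleNr scalerA exprSr.
move/(congr1 (mulmx E)); rewrite mulmx0 mulmxA E_expr -scalemxAl => /eqP.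
by rewrite scalemx_eq0 expf_eq0 oppr_eq0 (negbTE abN0) andbF => /eqP.
Qed.

Lemma opp_gen_eigen_mulmx_eq0 A B v (c : F) m :
  A *m B = B *m A -> (A + B) *m v = 0 ->
  (A - c%:M) ^+ m *m v = 0 -> (B - (- c)%:M) ^+ m *m v = 0.
Proof.
move=> AB; have step y : (A + B) *m y = 0 -> (B - (- c)%:M) *m y = - ((A - c%:M) *m y).
  move=> /eqP; rewrite mulmxDl addr_eq0 => /eqP Ay.
  by rewrite !mulmxBl Ay raddfN /= mulNmx !opprD !opprK.
suff expr_eq n y : (A + B) *m y = 0 ->
    (B - (- c)%:M) ^+ n *m y = (- 1) ^+ n *: ((A - c%:M) ^+ n *m y).
  by move=> ABv Av; rewrite expr_eq // Av scaler0.
elim: n => [|n IHn] in y *; move=> ABy; first by rewrite !expr0 !mul1mx scale1r.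
rewrite !exprSr -!mulmxE -!mulmxA step // mulmxN IHn.
  by rewrite mulrN1 scaleNr.
have ABAc : (A + B) *m (A - c%:M) = (A - c%:M) *m (A + B).
  by rewrite mulmxBr mulmxBl mulmxDr mulmxDl AB scalar_mxC.
by rewrite mulmxA ABAc -mulmxA ABy mulmx0.
Qed.
End NilpotentActions.

Section Neighbour.
Variables (n : nat) (k : 'I_n).
Hypothesis lt_k1_n : (k.+1 < n)%N.

Lemma nxt_neq : nxt k != k.
Proof. by rewrite -val_eqE /nxt val_insubd lt_k1_n gtn_eqF. Qed.

Lemma sw_k : sw k k = nxt k. Proof. exact: tpermL. Qed.
Lemma sw_nxt : sw k (nxt k) = k. Proof. exact: tpermR. Qed.

Lemma swK : involutive (sw k). Proof. exact: tpermK. Qed.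

Lemma swD i : i != k -> i != nxt k -> sw k i = i.
Proof. by move=> ik ink; rewrite /sw tpermD // eq_sym. Qed.

Lemma inSeq_swlab r (c : lab n) : inSeq r c -> inSeq r (swlab k c).
Proof.
rewrite /inSeq -(card_image (can_inj swK)) => /eqP <-; apply/eqP/eq_card => i.
rewrite inE ffunE; apply/idP/imageP => [ci | [j cj ->]]; last by rewrite swK.
by exists (sw k i); rewrite ?swK.
Qed.

Lemma bdiag_ok_bid r (c : lab n) : inSeq r c -> bdiag_ok r (bid c).
Proof.
move=> rc; rewrite /bdiag_ok /= rc; apply/forallP => -[i|i] /=;
  by rewrite !ffunE /= !eqxx.
Qed.

Lemma bdiag_ok_cup r (c d : lab n) : inSeq r c -> inSeq r d ->
  c k != c (nxt k) -> d k != d (nxt k) ->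
  (forall i, i != k -> i != nxt k -> d i = c i) ->
  bdiag_ok r (BDiag c d (cupmat k)).
Proof.
move=> rc rd ck dk dc; rewrite /bdiag_ok /= rc rd; apply/forallP.
have nk := nxt_neq; have kn : k != nxt k by rewrite eq_sym.
case=> i; (have [->|ik] := eqVneq i k; last have [->|ink] := eqVneq i (nxt k)).
all: rewrite /= !ffunE ?eqxx ?orbT ?(negbTE ik) ?(negbTE ink) ?sw_k ?sw_nxt /=.
all: rewrite ?ffunE ?eqxx ?orbT ?(negbTE ik) ?(negbTE ink) ?sw_k ?sw_nxt /=.
all: rewrite ?(inj_eq inl_inj) ?(inj_eq inr_inj) ?eqxx ?nk ?kn //=.
all: by rewrite 1?eq_sym // dc.
Qed.
End Neighbour.

Section BrauerProjections.
Variables (F : fieldType) (r t dim : nat) (om : F).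
Local Notation n := (r + t).
Variable rho : bdiag n -> 'M[F]_dim.
Hypothesis rho_mul : forall d1 d2 : bdiag n, bdiag_ok r d1 -> bdiag_ok r d2 ->
  rho d1 *m rho d2 =
  if btop d2 == bbot d1 then (om ^+ bloops d1 d2) *: rho (bcomp d1 d2) else 0.
Hypothesis rho_One_sum : \sum_(a : lab n | inSeq r a) One rho a = 1%:M.

Lemma One_mul_sum_rho_One (D : lab n -> bdiag n) (Q : pred (lab n))
    (g : lab n -> lab n) (a : lab n) :
  (forall c, bbot (D c) = c) -> (forall c, btop (D c) = g c) ->
  (forall c, inSeq r c -> Q c -> bdiag_ok r (D c)) ->
  inSeq r a -> inSeq r (g a) ->
  let X := \sum_(c | inSeq r c && Q c) rho (D c) in
  X *m One rho a = One rho (g a) *m (X *m One rho a).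
Proof.
move=> botD topD okD ra rga X.
rewrite -[LHS]mul1mx -rho_One_sum mulmx_suml (bigD1 (g a)) //= big1 ?addr0 //.
move=> b /andP [rb bNga]; rewrite /X mulmx_suml mulmx_sumr big1 // => c /andP [rc Qc].
move: (bdiag_ok_bid rb) (okD c rc Qc) => okb; have [-> okc | cNa okc] := eqVneq c a.
  by rewrite mulmxA rho_mul //= topD eq_sym (negbTE bNga) mul0mx.
by rewrite rho_mul ?bdiag_ok_bid //= botD eq_sym (negbTE cNa) mulmx0.
Qed.

Variable k : 'I_n.
Hypothesis lt_k1_n : (k.+1 < n)%N.

Lemma Eop_One (a : lab n) : inSeq r a ->
  Eop rho k *m One rho a = One rho a *m (Eop rho k *m One rho a).
Proof.
move=> ra; apply: (One_mul_sum_rho_One (g := id)) => // c rc ck.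
exact: bdiag_ok_cup.
Qed.

Lemma Ehat_One (a : lab n) : inSeq r a ->
  Ehat rho k *m One rho a = One rho (swlab k a) *m (Ehat rho k *m One rho a).
Proof.
move=> ra; apply: One_mul_sum_rho_One; rewrite ?inSeq_swlab // => c rc ck.
apply: bdiag_ok_cup; rewrite ?inSeq_swlab //=.
  by rewrite !ffunE sw_k ?sw_nxt // eq_sym.
by move=> i ik ink; rewrite ffunE swD.
Qed.

End BrauerProjections.

Section WeightDecomposition.
Variables (F : closedFieldType) (r t dim : nat).
Local Notation n := (r + t).
Variables (rho : bdiag n -> 'M[F]_dim) (Y : 'I_n -> 'M[F]_dim).
Hypothesis Y_comm : forall i j, commutes (Y i) (Y j).
Variables (k : 'I_n) (w : 'I_n -> F).
Hypothesis nxt_neq_k : nxt k != k.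

Definition Iset_wt (c : F) : 'I_n -> F :=
  fun j => if j == k then c else if j == nxt k then - c else w j.

Lemma Iset_wtP c : Iset k w (Iset_wt c).
Proof.
split=> [j jk jnk | ]; first by rewrite /Iset_wt (negbTE jk) (negbTE jnk).
by rewrite /Iset_wt eqxx (negbTE nxt_neq_k) eqxx subrr.
Qed.

Lemma in_wsp_sum_Iset (a : lab n) (x : 'cV[F]_dim) N :
  (forall i, commutes (Y i) (One rho a)) ->
  (exists u, x = One rho a *m u) -> (Y k + Y (nxt k)) *m x = 0 ->
  (forall j, j != k -> j != nxt k -> (Y j - (w j)%:M) ^+ N *m x = 0) ->
  in_wsp_sum rho Y (Iset k w) a x.
Proof.
move=> Y_One [u x_def] Zx wx.
have [L [sumL projL]] := gen_eigen_projectors (Y k).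
pose pr0 := (0 : F, 0 : 'M[F]_dim).
rewrite (big_nth pr0) big_mkord in sumL.
exists (size L), (fun l => Iset_wt (nth pr0 L l).1), (fun l => (nth pr0 L l).2 *m x).
split; last by rewrite -mulmx_suml sumL mul1mx.
move=> l; have := mem_nth pr0 (ltn_ord l).
case: (nth pr0 L l) => c P /projL /= [[m Pm] P_comm].
split; first exact: Iset_wtP.
split; first by exists (P *m u); rewrite x_def !mulmxA P_comm ?Y_One.
have Pmx : (Y k - c%:M) ^+ m *m (P *m x) = 0 by rewrite mulmxA Pm mul0mx.
exists (N + m)%N => j; rewrite /Iset_wt.
have [-> | jk] := eqVneq j k; first exact: mulmx_expr_eq0_leq (leq_addl N m) Pmx.
have [-> | jnk] := eqVneq j (nxt k).
  have ZPx : (Y k + Y (nxt k)) *m (P *m x) = 0.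
    rewrite mulmxA -P_comm; first by rewrite -mulmxA Zx mulmx0.
    by rewrite mulmxDr mulmxDl (Y_comm k (nxt k)).
  exact/(mulmx_expr_eq0_leq (leq_addl N m))/(opp_gen_eigen_mulmx_eq0 (Y_comm _ _) ZPx).
have wPx : (Y j - (w j)%:M) ^+ N *m (P *m x) = 0.
  rewrite mulmxA -P_comm; first by rewrite -mulmxA wx ?mulmx0.
  by symmetry; apply: subr_scalar_mx_expr_comm (Y_comm j k).
exact: mulmx_expr_eq0_leq (leq_addr m N) wPx.
Qed.

Lemma op_in_wsp_sum (Op : 'M[F]_dim) (a a' : lab n) (v : 'cV[F]_dim) :
  (forall i, commutes (Y i) (One rho a')) ->
  Op *m One rho a = One rho a' *m (Op *m One rho a) ->
  (Y k + Y (nxt k)) *m Op = 0 ->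
  (forall j, j != k -> j != nxt k -> commutes (Y j) Op) ->
  in_wsp rho Y a w v -> in_wsp_sum rho Y (Iset k w) a' (Op *m v).
Proof.
move=> Y_One Op_One ZOp Y_Op [[u ->] [N Nv]].
apply: (@in_wsp_sum_Iset _ _ N) => //.
- by exists (Op *m One rho a *m u); rewrite [RHS]mulmxA -Op_One mulmxA.
- by rewrite mulmxA ZOp mul0mx.
by move=> j jk jnk; rewrite mulmxA subr_scalar_mx_expr_comm ?Y_Op // -mulmxA Nv mulmx0.
Qed.

End WeightDecomposition.

Theorem lemma3p2 (r t : nat) (om : nat -> C) (dim : nat)
  (rho : bdiag (r + t) -> 'M[C]_dim) (Y : 'I_(r + t) -> 'M[C]_dim) :
  is_VBr_module om rho Y ->
  forall (a : lab (r + t)) (k : 'I_(r + t)) (w : 'I_(r + t) -> C),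
    inSeq r a -> (k.+1 < r + t)%N -> swlab k a != a ->
    (w k + w (nxt k) != 0 ->
       forall v : 'cV[C]_dim, in_wsp rho Y a w v ->
         Eop rho k *m v = 0 /\ Ehat rho k *m v = 0) /\
    (w k + w (nxt k) = 0 ->
       forall v : 'cV[C]_dim, in_wsp rho Y a w v ->
         in_wsp_sum rho Y (Iset k w) a (Eop rho k *m v) /\
         in_wsp_sum rho Y (Iset k w) (swlab k a) (Ehat rho k *m v)).
Proof.
case=> rho_mul rho_One_sum Y_comm Y_One [Y_comm_k _ _ _ Y_ann] a k w ra lt_k1_n _.
have [EZ ZE EhZ ZEh] := Y_ann k lt_k1_n.
have Y_comm_E j : j != k -> j != nxt k ->
    commutes (Y j) (Eop rho k) /\ commutes (Y j) (Ehat rho k).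
  by move=> jk jnk; have [_ _ ? ?] := Y_comm_k k j lt_k1_n jk jnk.
split=> [sum_w v [_ [N Nv]] | _ v va].
  by split; apply: gen_eigen_annihilated_eq0 (Y_comm k (nxt k)) (Nv k) (Nv (nxt k)) sum_w.
have nk := nxt_neq lt_k1_n.
split; apply: op_in_wsp_sum va => //; try by move=> j jk jnk; case: (Y_comm_E j jk jnk).
- by move=> i; apply/Y_One/ra.
- exact: (Eop_One rho_mul rho_One_sum lt_k1_n ra).
- by move=> i; apply/Y_One/inSeq_swlab.
exact: (Ehat_One rho_mul rho_One_sum lt_k1_n ra).
Qed.
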